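(* For every integer $t\ge 2$, with $n:=2^{t-2}$, the Erdős–Szekeres construction of $n$ points can be realized with integer coordinates: there is an Erdős–Szekeres construction for $t$, in general position, all of whose points have integer coordinates and lie in an axis-parallel square of side length $O(n^2(\log_2 n)^3)$ (as $t\to\infty$).
   Context: For finite point sets $X,Y$ in the plane, $X$ is high above $Y$ if every line determined by two points of $X$ lies strictly above every point of $Y$, and every line determined by two points of $Y$ lies strictly below every point of $X$. For positive integers $k,l$, an $S_{k,l}$-set is defined recursively: if $k\le 2$ or $l\le 2$ it is a single point; otherwise it is a set $L\cup R$ where $L$ is an $S_{k-1,l}$-set, $R$ is an $S_{k,l-1}$-set, every point of $R$ lies strictly to the right of every point of $L$, and $R$ is high above $L$. (An $S_{k,l}$-set has $\binom{k+l-4}{k-2}$ points.) An Erdős–Szekeres construction for $t$ is a point set $\bigcup_{i=0}^{t-2}A_i$, where each $A_i$ is an $S_{t-i,i+2}$-set, such that: for $i<j$ every point of $A_i$ has smaller $x$-coordinate than every point of $A_j$; every line through a point of $A_i$ and a point of $A_j$ with $i\ne j$ has negative slope; and for $0\le i<j<k\le t-2$ and any $p_i\in A_i$, $p_j\in A_j$, $p_k\in A_k$, the triple $(p_i,p_j,p_k)$ is a right (clockwise) turn. It has $2^{t-2}$ points. *)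

From mathcomp Require Import all_boot all_order all_algebra.
Set Implicit Arguments. Unset Strict Implicit. Unset Printing Implicit Defensive.
Import Order.TTheory GRing.Theory Num.Theory.
Local Open Scope ring_scope.

Definition pt := (int * int)%type.
Definition px (p : pt) : int := p.1.
Definition py (p : pt) : int := p.2.

(* cross product det(q - p, r - p); > 0 left turn, < 0 right (clockwise) turn *)
Definition orient (p q r : pt) : int :=
  (px q - px p) * (py r - py p) - (py q - py p) * (px r - px p).

(* For px p < px q this is exactly: the y-value of line pq at abscissa px r
   exceeds py r.  A vertical line (px p = px q) is above no point. *)
Definition line_above (p q r : pt) : Prop :=
  - orient p q r * (px q - px p) > 0.

Definition line_below (p q r : pt) : Prop :=
  orient p q r * (px q - px p) > 0.

Definition high_above (X Y : seq pt) : Prop :=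
  (forall p q r, p \in X -> q \in X -> p != q -> r \in Y -> line_above p q r) /\
  (forall p q r, p \in Y -> q \in Y -> p != q -> r \in X -> line_below p q r).

(* S_{k,l}-sets (a set is represented by a sequence listing its points) *)
Inductive S_set : nat -> nat -> seq pt -> Prop :=
| S_base (k l : nat) (p : pt) : (k <= 2)%N \/ (l <= 2)%N -> S_set k l [:: p]
| S_step (k l : nat) (L R : seq pt) :
    (2 < k)%N -> (2 < l)%N ->
    S_set k.-1 l L -> S_set k l.-1 R ->
    (forall p q, p \in L -> q \in R -> px p < px q) ->
    high_above R L ->
    S_set k l (L ++ R).

Definition right_turn (p q r : pt) : Prop := orient p q r < 0.

Definition neg_slope (p q : pt) : Prop := (py q - py p) * (px q - px p) < 0.

Definition ES_construction (t : nat) (A : nat -> seq pt) : Prop :=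
  [/\ forall i, (i <= t - 2)%N -> S_set (t - i) (i + 2) (A i),
      forall i j p q, (i < j)%N -> (j <= t - 2)%N -> p \in A i -> q \in A j ->
        px p < px q /\ neg_slope p q &
      forall i j k p q r, (i < j)%N -> (j < k)%N -> (k <= t - 2)%N ->
        p \in A i -> q \in A j -> r \in A k -> right_turn p q r].

Definition ES_points (t : nat) (A : nat -> seq pt) : seq pt :=
  flatten [seq A i | i <- iota 0 (t - 1)].

Definition general_position (P : seq pt) : Prop :=
  forall p q r, p \in P -> q \in P -> r \in P ->
    p != q -> q != r -> p != r -> orient p q r != 0.

Definition in_square (P : seq pt) (s : int) : Prop :=
  exists x0 y0 : int, forall p, p \in P ->
    [/\ x0 <= px p, px p <= x0 + s, y0 <= py p & py p <= y0 + s].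

From mathcomp Require Import all_boot all_order all_algebra.
From mathcomp Require Import ring lra zify.
Import Order.TTheory GRing.Theory Num.Theory.
Set Implicit Arguments. Unset Strict Implicit.
Local Open Scope ring_scope.

(* Each S-set is built inside a box of side [width m = (4^m - 1)/3] with
   distinct abscissae and all slopes in [-3m, 2].  To join [L] and [R] we
   translate [R] by (3w+1, 9w+3): since slopes are at most 2, every line through
   two points of the copy of [R] passes above the box of [L] and every line
   through two points of [L] passes below the copy of [R].  A shear of slope -3
   then brings the union back into a box of side [4w+1], with slopes in
   [-3(m+1), 2].
   The block [A_i] is sheared to nondecreasing slopes and put at abscissa about
   [i P], at height [-2 P i (i+1)] on a parabola.  Chords between blocks [i < j]
   have slope about [-2 (i+j+1)], strictly between [-(4j+2)] and [-(4i+2)]; this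
   gives the negative slopes, the right turns and general position.  The
   square has side [O (P m^2)] with [P = O (m 4^m)], i.e. [O (n^2 (log n)^3)]. *)

Lemma orient_swap12 p q r : orient q p r = - orient p q r.
Proof. rewrite /orient; ring. Qed.

Lemma orient_swap23 p q r : orient p r q = - orient p q r.
Proof. rewrite /orient; ring. Qed.

Lemma orient_rot p q r : orient q r p = orient p q r.
Proof. rewrite /orient; ring. Qed.

Lemma orient_consecutive p q r :
  orient p q r = (px q - px p) * (py r - py q) - (py q - py p) * (px r - px q).
Proof. rewrite /orient; ring. Qed.

Lemma line_above_orient p q r : line_above p q r -> orient p q r != 0.
Proof. by apply: contraTneq => ->; rewrite /line_above oppr0 mul0r ltxx. Qed.

Lemma line_below_orient p q r : line_below p q r -> orient p q r != 0.
Proof. by apply: contraTneq => ->; rewrite /line_below mul0r ltxx. Qed.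

Lemma right_turn_of_slopes (c : int) p q r : px p < px q -> px q < px r ->
  c * (px q - px p) <= py q - py p -> py r - py q < c * (px r - px q) ->
  orient p q r < 0.
Proof. rewrite orient_consecutive; nia. Qed.

Lemma left_turn_of_slopes (c : int) p q r : px p < px q -> px q < px r ->
  py q - py p < c * (px q - px p) -> c * (px r - px q) <= py r - py q ->
  0 < orient p q r.
Proof. rewrite orient_consecutive; nia. Qed.

Lemma line_above_of_slope (s : int) p q r : px p != px q ->
  (px q - px p) * (py q - py p) <= s * (px q - px p) ^+ 2 ->
  px r <= px p -> py r < py p + s * (px r - px p) -> line_above p q r.
Proof.
move=> /eqP npq slope_pq r_left r_under; rewrite /line_above /orient.
have dx2_gt0 : 0 < (px q - px p) ^+ 2.
  by rewrite exprn_even_gt0 //= subr_eq0 eq_sym; apply/eqP.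
nia.
Qed.

Lemma line_below_of_slope (s : int) p q r : px p != px q ->
  (px q - px p) * (py q - py p) <= s * (px q - px p) ^+ 2 ->
  px p <= px r -> py p + s * (px r - px p) < py r -> line_below p q r.
Proof.
move=> /eqP npq slope_pq r_right r_over; rewrite /line_below /orient.
have dx2_gt0 : 0 < (px q - px p) ^+ 2.
  by rewrite exprn_even_gt0 //= subr_eq0 eq_sym; apply/eqP.
nia.
Qed.

Definition shear (a s b : int) (p : pt) : pt := (px p + a, py p + s * px p + b).

Lemma px_shear a s b p : px (shear a s b p) = px p + a.
Proof. by []. Qed.

Lemma px_shearB a s b p q : px (shear a s b q) - px (shear a s b p) = px q - px p.
Proof. rewrite !px_shear; ring. Qed.

Lemma py_shearB a s b p q :
  py (shear a s b q) - py (shear a s b p) = py q - py p + s * (px q - px p).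
Proof. rewrite /shear /px /py /=; ring. Qed.

Lemma orient_shear a s b p q r :
  orient (shear a s b p) (shear a s b q) (shear a s b r) = orient p q r.
Proof. rewrite /orient /shear /px /py /=; ring. Qed.

Lemma line_above_shear a s b p q r :
  line_above (shear a s b p) (shear a s b q) (shear a s b r) <-> line_above p q r.
Proof. by rewrite /line_above orient_shear px_shearB. Qed.

Lemma line_below_shear a s b p q r :
  line_below (shear a s b p) (shear a s b q) (shear a s b r) <-> line_below p q r.
Proof. by rewrite /line_below orient_shear px_shearB. Qed.

Lemma high_above_shear a s b X Y :
  high_above X Y -> high_above (map (shear a s b) X) (map (shear a s b) Y).
Proof.
have shear_neq p q : shear a s b p != shear a s b q -> p != q.
  by apply: contra => /eqP ->.
move=> [above below]; split=> p q r /mapP[p0 p0P ->] /mapP[q0 q0P ->] npq /mapP[r0 r0P ->].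
- by apply/line_above_shear/above => //; apply: shear_neq.
- by apply/line_below_shear/below => //; apply: shear_neq.
Qed.

Lemma S_set_shear a s b k l P : S_set k l P -> S_set k l (map (shear a s b) P).
Proof.
elim=> {k l P} [k l p kl_small | k l L R k_gt2 l_gt2 _ IHL _ IHR LR_x RL_high].
  exact: S_base.
rewrite map_cat; apply: S_step => //; last exact: high_above_shear.
by move=> _ _ /mapP[p pL ->] /mapP[q qR ->]; rewrite !px_shear ltrD2r LR_x.
Qed.

Lemma S_set_general_position k l P : S_set k l P -> general_position P.
Proof.
elim=> {k l P} [k l p0 _ | k l L R _ _ _ IHL _ IHR _ [above below]] p q r.
  by rewrite !inE => /eqP -> /eqP ->; rewrite eqxx.
rewrite !mem_cat => /orP[pP|pP] /orP[qP|qP] /orP[rP|rP] npq nqr npr.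
- exact: IHL.
- exact/line_below_orient/below.
- by rewrite -oppr_eq0 -orient_swap23; apply/line_below_orient/below.
- by rewrite -orient_rot; apply/line_above_orient/above.
- by rewrite -orient_rot; apply/line_below_orient/below.
- by rewrite -oppr_eq0 -orient_swap23; apply/line_above_orient/above.
- exact/line_above_orient/above.
- exact: IHR.
Qed.

Definition boxed (w : int) (P : seq pt) : Prop :=
  forall p, p \in P -> 0 <= px p <= w /\ 0 <= py p <= w.

Definition slopes_within (lo hi : int) (P : seq pt) : Prop :=
  forall p q, p \in P -> q \in P -> px p < px q ->
    lo * (px q - px p) <= py q - py p <= hi * (px q - px p).

Lemma slopes_withinW lo hi lo' hi' P : lo <= lo' -> hi' <= hi ->
  slopes_within lo' hi' P -> slopes_within lo hi P.
Proof.
move=> lo_le hi_le sP p q pP qP pq; have := sP p q pP qP pq.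
rewrite -subr_gt0 in pq; nia.
Qed.

Lemma slopes_within_cat lo hi L R : slopes_within lo hi L -> slopes_within lo hi R ->
  (forall p q, p \in L -> q \in R ->
     px p < px q /\ lo * (px q - px p) <= py q - py p <= hi * (px q - px p)) ->
  slopes_within lo hi (L ++ R).
Proof.
move=> sL sR sLR p q; rewrite !mem_cat => /orP[pL|pR] /orP[qL|qR].
- exact: sL.
- by have [] := sLR p q pL qR.
- by move=> pq; have [qp _] := sLR q p qL pR; have := lt_trans pq qp; rewrite ltxx.
- exact: sR.
Qed.

Lemma slopes_within_shear a s b lo hi P : slopes_within lo hi P ->
  slopes_within (lo + s) (hi + s) (map (shear a s b) P).
Proof.
move=> sP _ _ /mapP[p pP ->] /mapP[q qP ->]; rewrite !px_shear ltrD2r => /(sP p q pP qP).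
rewrite py_shearB; nia.
Qed.

Lemma slopes_within_sqr lo hi P p q : slopes_within lo hi P -> p \in P -> q \in P ->
  (px q - px p) * (py q - py p) <= hi * (px q - px p) ^+ 2.
Proof.
move=> sP pP qP; case: (ltgtP (px p) (px q)) => [pq|qp|->].
- by have := sP p q pP qP pq; rewrite -subr_gt0 in pq; nia.
- by have := sP q p qP pP qp; rewrite -subr_gt0 in qp; nia.
- by rewrite subrr expr0n /= mulr0 mul0r.
Qed.

Lemma px_inj_cat L R : {in L &, injective px} -> {in R &, injective px} ->
  (forall p q, p \in L -> q \in R -> px p < px q) -> {in L ++ R &, injective px}.
Proof.
move=> iL iR LR p q; rewrite !mem_cat => /orP[pL|pR] /orP[qL|qR] e.
- exact: iL.
- by have := LR p q pL qR; rewrite e ltxx.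
- by have := LR q p qL pR; rewrite e ltxx.
- exact: iR.
Qed.

Lemma px_inj_shear a s b P : {in P &, injective px} ->
  {in map (shear a s b) P &, injective px}.
Proof.
move=> iP _ _ /mapP[p pP ->] /mapP[q qP ->]; rewrite !px_shear => /addIr e.
by rewrite (iP p q).
Qed.

Fixpoint width (m : nat) : nat := if m is m'.+1 then (4 * width m' + 1)%N else 0%N.

Lemma widthS m : (width m.+1)%:Z = 4 * (width m)%:Z + 1.
Proof. by rewrite /= PoszD PoszM. Qed.

Definition tame (m : nat) (P : seq pt) : Prop :=
  [/\ boxed (width m)%:Z P, {in P &, injective px} & slopes_within (- 3 * m%:Z) 2 P].

Lemma tame_point m : tame m [:: (0, 0)].
Proof.
split.
- by move=> p; rewrite inE => /eqP ->.
- by move=> p q; rewrite !inE => /eqP -> /eqP ->.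
- by move=> p q; rewrite !inE => /eqP -> /eqP ->; rewrite ltxx.
Qed.

Definition join_blocks (w : int) (L R : seq pt) : seq pt :=
  map (shear 0 (-3) (3 * w)) (L ++ map (shear (3 * w + 1) 0 (9 * w + 3)) R).

Section Join.
Variables (w : int) (L R : seq pt).
Hypotheses (w_ge0 : 0 <= w) (boxL : boxed w L) (boxR : boxed w R).

Let shift := shear (3 * w + 1) 0 (9 * w + 3).

Lemma shift_right p q : p \in L -> q \in R -> px p < px (shift q).
Proof. by move=> /boxL[px_p _] /boxR[px_q _]; rewrite px_shear; lia. Qed.

Lemma shift_slope_sqr lo P p q : slopes_within lo 2 P -> p \in P -> q \in P ->
  (px (shift q) - px (shift p)) * (py (shift q) - py (shift p))
    <= 2 * (px (shift q) - px (shift p)) ^+ 2.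
Proof.
move=> sP pP qP; have := slopes_within_sqr sP pP qP.
by rewrite px_shearB py_shearB mul0r addr0.
Qed.

Lemma high_above_shift lo lo' : {in L &, injective px} -> {in R &, injective px} ->
  slopes_within lo 2 L -> slopes_within lo' 2 R -> high_above (map shift R) L.
Proof.
move=> iL iR sL sR; split.
- move=> _ _ r /mapP[p pR ->] /mapP[q qR ->] npq rL.
  apply: (line_above_of_slope (s := 2)).
  + rewrite !px_shear (inj_eq (addIr _)) (inj_in_eq iR) //.
    by apply: contra npq => /eqP ->.
  + exact: shift_slope_sqr sR pR qR.
  + by move: (boxR pR) (boxL rL); rewrite /shift /shear /px /py /=; lia.
  + by move: (boxR pR) (boxL rL); rewrite /shift /shear /px /py /=; lia.
- move=> p q _ pL qL npq /mapP[r rR ->].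
  apply: (line_below_of_slope (s := 2)).
  + by rewrite (inj_in_eq iL).
  + exact: slopes_within_sqr sL pL qL.
  + by move: (boxL pL) (boxR rR); rewrite /shift /shear /px /py /=; lia.
  + by move: (boxL pL) (boxR rR); rewrite /shift /shear /px /py /=; lia.
Qed.

Lemma boxed_join : boxed (4 * w + 1) (join_blocks w L R).
Proof.
move=> _ /mapP[p + ->]; rewrite mem_cat => /orP[/boxL | /mapP[q /boxR + ->]];
  rewrite /shift /shear /px /py /=; lia.
Qed.

Hypotheses (iL : {in L &, injective px}) (iR : {in R &, injective px}).

Lemma px_inj_join : {in join_blocks w L R &, injective px}.
Proof.
apply/px_inj_shear/px_inj_cat => //; last by move=> p _ pL /mapP[q qR ->]; exact: shift_right.
exact: px_inj_shear.
Qed.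

Lemma slopes_within_join lo : lo <= 0 ->
  slopes_within lo 2 L -> slopes_within lo 2 R -> slopes_within (lo - 3) 2 (join_blocks w L R).
Proof.
move=> lo_le0 sL sR; apply: (@slopes_withinW _ _ (lo - 3) (5 - 3)) => //.
apply: slopes_within_shear; apply: slopes_within_cat.
- exact: slopes_withinW sL.
- have sR5 : slopes_within lo 5 R by exact: slopes_withinW sR.
  by have := slopes_within_shear (a := 3 * w + 1) (s := 0) (b := 9 * w + 3) sR5; rewrite !addr0.
- move=> p _ pL /mapP[q qR ->]; split; first exact: shift_right.
  move: (boxL pL) (boxR qR); rewrite /shift /shear /px /py /=; nia.
Qed.

Lemma S_set_join k l lo lo' : (2 < k)%N -> (2 < l)%N -> S_set k.-1 l L -> S_set k l.-1 R ->
  slopes_within lo 2 L -> slopes_within lo' 2 R ->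
  S_set k l (join_blocks w L R).
Proof.
move=> k_gt2 l_gt2 SL SR sL sR; apply/S_set_shear/S_step => //.
- exact: S_set_shear.
- by move=> p _ pL /mapP[q qR ->]; exact: shift_right.
- exact: high_above_shift sL sR.
Qed.
End Join.

Lemma tame_join m L R : tame m L -> tame m R -> tame m.+1 (join_blocks (width m) L R).
Proof.
move=> [boxL iL sL] [boxR iR sR]; split.
- by rewrite widthS; exact: boxed_join.
- exact: px_inj_join.
- have -> : - 3 * (m.+1)%:Z = - 3 * m%:Z - 3 by rewrite intS; ring.
  by apply: slopes_within_join => //; lia.
Qed.

Fixpoint S_build (m k l : nat) : seq pt :=
  if m is m'.+1 then
    if (2 < k)%N && (2 < l)%N then
      join_blocks (width m') (S_build m' k.-1 l) (S_build m' k l.-1)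
    else [:: (0, 0)]
  else [:: (0, 0)].

Lemma S_build_spec m k l : (k + l <= m + 4)%N ->
  S_set k l (S_build m k l) /\ tame m (S_build m k l).
Proof.
elim: m k l => [|m IH] k l kl_le /=.
  by split; [apply: S_base; lia | exact: tame_point].
case: ifP => [/andP[k_gt2 l_gt2] | /negbT kl_small]; last first.
  by split; [apply: S_base; rewrite negb_and -!leqNgt in kl_small; lia | exact: tame_point].
have [SL tL] := IH k.-1 l ltac:(lia).
have [SR tR] := IH k l.-1 ltac:(lia).
split; last exact: tame_join.
case: tL tR => [bL iL sL] [bR iR sR].
by apply: (S_set_join _ bL bR iL iR k_gt2 l_gt2 SL SR sL sR).
Qed.

Lemma slopes_between_levels (P W H i j xp yp xq yq : int) :
  0 <= i -> i < j -> 0 <= W -> H + (4 * j + 2) * W < 2 * P ->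
  i * P <= xp <= i * P + W -> - (2 * P * i * (i + 1)) <= yp <= - (2 * P * i * (i + 1)) + H ->
  j * P <= xq <= j * P + W -> - (2 * P * j * (j + 1)) <= yq <= - (2 * P * j * (j + 1)) + H ->
  [/\ xp < xq, - (4 * j + 2) * (xq - xp) < yq - yp & yq - yp < - (4 * i + 2) * (xq - xp)].
Proof.
move=> i_ge0 ij W_ge0 P_big /andP[xp_lo xp_hi] /andP[yp_lo yp_hi].
move=> /andP[xq_lo xq_hi] /andP[yq_lo yq_hi].
have P_gt : W < P by nia.
have gap : P <= (j - i) * P by nia.
split.
- nia.
- have : 0 <= (4 * j + 2) * (xq - xp - ((j - i) * P - W)) by apply: mulr_ge0; lia.
  have : 0 <= 2 * P * (j - i) * (j - i - 1) by apply: mulr_ge0; nia.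
  nia.
- have : 0 <= (4 * i + 2) * ((j - i) * P + W - (xq - xp)) by apply: mulr_ge0; lia.
  have : 0 <= 2 * P * (j - i) * (j - i - 1) by apply: mulr_ge0; nia.
  nia.
Qed.

Lemma general_position_sorted P : {in P &, injective px} ->
  (forall p q r, p \in P -> q \in P -> r \in P -> px p < px q -> px q < px r ->
     orient p q r != 0) ->
  general_position P.
Proof.
move=> iP sorted p q r pP qP rP npq nqr npr.
have neq_px a b : a \in P -> b \in P -> a != b -> px a != px b.
  by move=> aP bP; apply: contra => /eqP /(iP a b aP bP) ->.
case: (ltgtP (px p) (px q)) (neq_px _ _ pP qP npq) => // [pq|qp] _;
case: (ltgtP (px q) (px r)) (neq_px _ _ qP rP nqr) => // [qr|rq] _;
case: (ltgtP (px p) (px r)) (neq_px _ _ pP rP npr) => // [pr|rp] _.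
- exact: sorted.
- by have := lt_trans (lt_trans pq qr) rp; rewrite ltxx.
- by rewrite -oppr_eq0 -orient_swap23; apply: sorted.
- by rewrite (orient_rot r p q); apply: sorted.
- by rewrite -oppr_eq0 -orient_swap12; apply: sorted.
- by rewrite -orient_rot; apply: sorted.
- by have := lt_trans (lt_trans pr rq) qp; rewrite ltxx.
- by rewrite -orient_rot -oppr_eq0 -orient_swap12; apply: sorted.
Qed.

Section Construction.
Variable t : nat.
Let m : nat := (t - 2)%N.
Let W : int := (width m)%:Z.
Let P : int := 4 * (m%:Z + 2) * W + 1.
Let H : int := (3 * m%:Z + 1) * W.
Let level (i : nat) : int := 2 * P * i%:Z * (i%:Z + 1).

Definition ES_block (i : nat) : seq pt :=
  map (shear (i%:Z * P) (3 * m%:Z) (- level i)) (S_build m (t - i) (i + 2)).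

Lemma S_build_block i : (i <= m)%N ->
  S_set (t - i) (i + 2) (S_build m (t - i) (i + 2)) /\ tame m (S_build m (t - i) (i + 2)).
Proof. by move=> i_le; apply: S_build_spec; rewrite /m; lia. Qed.

Lemma S_set_block i : (i <= m)%N -> S_set (t - i) (i + 2) (ES_block i).
Proof. by move=> /S_build_block[S _]; exact: S_set_shear. Qed.

Lemma px_inj_block i : (i <= m)%N -> {in ES_block i &, injective px}.
Proof. by move=> /S_build_block[_ [_ iS _]]; exact: px_inj_shear. Qed.

Lemma slopes_within_block i : (i <= m)%N -> slopes_within 0 (3 * m%:Z + 2) (ES_block i).
Proof.
move=> /S_build_block[_ [_ _ sS]].
have := slopes_within_shear (a := i%:Z * P) (s := 3 * m%:Z) (b := - level i) sS.
by rewrite mulNr addNr addrC.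
Qed.

Lemma block_bounds i p : (i <= m)%N -> p \in ES_block i ->
  i%:Z * P <= px p <= i%:Z * P + W /\ - level i <= py p <= - level i + H.
Proof.
move=> /S_build_block[_ [bS _ _]] /mapP[[x y] /bS[x_in y_in] ->].
rewrite /shear /px /py /H /W /= in x_in y_in *.
have : 0 <= 3 * m%:Z * x <= 3 * m%:Z * (width m)%:Z.
  by apply/andP; split; [apply: mulr_ge0 | apply: ler_wpM2l]; lia.
lia.
Qed.

Lemma blocks_cross i j p q : (i < j)%N -> (j <= m)%N -> p \in ES_block i -> q \in ES_block j ->
  [/\ px p < px q, - (4 * j%:Z + 2) * (px q - px p) < py q - py p
    & py q - py p < - (4 * i%:Z + 2) * (px q - px p)].
Proof.
move=> ij jm pi qj.
have [xp yp] := block_bounds (ltnW (leq_trans ij jm)) pi.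
have [xq yq] := block_bounds jm qj.
apply: (slopes_between_levels (P := P) (W := W) (H := H)) => //; rewrite ?ltr_nat //.
have : (4 * j%:Z + 2) * W <= (4 * m%:Z + 2) * W by apply: ler_wpM2r => //; lia.
rewrite /P /H; lia.
Qed.

Lemma blocks_descend i j p q : (i < j)%N -> (j <= m)%N -> p \in ES_block i -> q \in ES_block j ->
  py q - py p < 0.
Proof.
move=> ij jm pi qj; have [pq _ steep] := blocks_cross ij jm pi qj.
by apply: (lt_le_trans steep); rewrite mulNr oppr_le0 mulr_ge0 // subr_ge0 ltW.
Qed.

Lemma mem_ES_points p :
  p \in ES_points t ES_block -> exists2 i, (i <= m)%N & p \in ES_block i.
Proof.
by case/flatten_mapP => i; rewrite mem_iota => /andP[_ i_lt] pi; exists i => //; rewrite /m; lia.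
Qed.

Lemma block_le i j p q : (i <= m)%N -> (j <= m)%N -> p \in ES_block i -> q \in ES_block j ->
  px p < px q -> (i <= j)%N.
Proof.
move=> im jm pi qj pq; rewrite leqNgt; apply/negP => ji.
by have [qp _ _] := blocks_cross ji im qj pi; have := lt_trans pq qp; rewrite ltxx.
Qed.

Lemma px_inj_ES : {in ES_points t ES_block &, injective px}.
Proof.
move=> p q /mem_ES_points[i im pi] /mem_ES_points[j jm qj] e.
case: (ltngtP i j) => [ij|ji|eij].
- by have [] := blocks_cross ij jm pi qj; rewrite e ltxx.
- by have [] := blocks_cross ji im qj pi; rewrite e ltxx.
- by subst j; exact: px_inj_block im _ _ pi qj e.
Qed.

Lemma ES_construction_blocks : ES_construction t ES_block.
Proof.
split.
- exact: S_set_block.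
- move=> i j p q ij jm pi qj; have [pq _ _] := blocks_cross ij jm pi qj.
  by rewrite /neg_slope pmulr_llt0 ?subr_gt0 //; split=> //; exact: blocks_descend pi qj.
- move=> i j k p q r ij jk km pi qj rk.
  have [pq lower _] := blocks_cross ij (ltnW (leq_trans jk km)) pi qj.
  have [qr _ upper] := blocks_cross jk km qj rk.
  exact: (right_turn_of_slopes (c := - (4 * j%:Z + 2))) (ltW lower) upper.
Qed.

Lemma general_position_ES : general_position (ES_points t ES_block).
Proof.
apply: general_position_sorted px_inj_ES _ => p q r.
move=> /mem_ES_points[i im pi] /mem_ES_points[j jm qj] /mem_ES_points[k km rk] pq qr.
have ij := block_le im jm pi qj pq; have jk := block_le jm km qj rk qr.
case: (ltngtP i j) ij => // [ij_lt | eij] _; case: (ltngtP j k) jk => // [jk_lt | ejk] _.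
- have [_ lower _] := blocks_cross ij_lt jm pi qj; have [_ _ upper] := blocks_cross jk_lt km qj rk.
  apply/ltr0_neq0; exact: (right_turn_of_slopes (c := - (4 * j%:Z + 2))) (ltW lower) upper.
- subst k; have /andP[flat _] := slopes_within_block jm qj rk qr.
  apply/lt0r_neq0/(left_turn_of_slopes (c := 0)) => //.
  by rewrite mul0r; exact: blocks_descend pi qj.
- subst j; have /andP[flat _] := slopes_within_block im pi qj pq.
  apply/ltr0_neq0/(right_turn_of_slopes (c := 0)) => //.
  by rewrite mul0r; exact: blocks_descend qj rk.
- subst j k; apply: (S_set_general_position (S_set_block im)) => //.
  + by apply: contraTneq pq => ->; rewrite ltxx.
  + by apply: contraTneq qr => ->; rewrite ltxx.
  + by apply: contraTneq (lt_trans pq qr) => ->; rewrite ltxx.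
Qed.

Definition ES_side : int := level m + H + m%:Z * P + W.

Lemma in_square_ES : in_square (ES_points t ES_block) ES_side.
Proof.
exists 0, (- level m) => p /mem_ES_points[i im pi].
have [x_in y_in] := block_bounds im pi.
have P_ge0 : 0 <= P by rewrite /P addr_ge0 // !mulr_ge0.
have H_ge0 : 0 <= H by rewrite /H !mulr_ge0.
have iP_le : i%:Z * P <= m%:Z * P by rewrite ler_wpM2r // lez_nat.
have level_ge0 : 0 <= level i by rewrite /level; apply: mulr_ge0 => //; apply: mulr_ge0.
have level_le : level i <= level m.
  by rewrite /level -!mulrA !ler_wpM2l // ?ler_pM ?lerD2r // lez_nat.
have iP_ge0 : 0 <= i%:Z * P by apply: mulr_ge0.
have W_ge0 : 0 <= W by [].
by rewrite /ES_side; split; lia.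
Qed.
End Construction.

Lemma width_pow4 m : (3 * width m + 1 = 4 ^ m)%N.
Proof. by elim: m => [|m IH] //=; rewrite expnS -IH; lia. Qed.

Lemma ES_side_le (m w P : int) : 1 <= m -> 0 <= w -> P = 4 * (m + 2) * w + 1 ->
  2 * P * m * (m + 1) + (3 * m + 1) * w + m * P + w <= 100 * (3 * w + 1) * m ^+ 3.
Proof.
move=> m_ge1 w_ge0 eP.
have P_le : P <= 4 * m * (3 * w + 1) by rewrite eP; nia.
have P_ge0 : 0 <= P by rewrite eP; nia.
have -> : m ^+ 3 = m * m * m by rewrite !exprS expr0 mulr1 mulrA.
have : 2 * P * m * (m + 1) <= 2 * (4 * m * (3 * w + 1)) * m * (2 * m) by nia.
have : (3 * m + 1) * w <= m * m * m * (4 * (3 * w + 1)) by nia.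
have : m * P <= m * m * m * (4 * (3 * w + 1)) by nia.
have : w <= m * m * m * (3 * w + 1) by nia.
nia.
Qed.

Lemma ES_side_bound t : (3 <= t)%N ->
  ES_side t <= (100 * (2 ^ (t - 2)) ^ 2 * (trunc_log 2 (2 ^ (t - 2))) ^ 3)%N%:Z.
Proof.
move=> t_ge3.
have -> : ((2 ^ (t - 2)) ^ 2 = 4 ^ (t - 2))%N by rewrite -expnM mulnC expnM.
rewrite trunc_expnK // -width_pow4 /ES_side.
rewrite !PoszM PoszD PoszM.
by apply: ES_side_le => //; lia.
Qed.

Theorem theorem4 :
  exists (C T : nat), forall t : nat, (2 <= t)%N ->
    let n := (2 ^ (t - 2))%N in
    exists A : nat -> seq pt, exists s : int,
      [/\ ES_construction t A,
          general_position (ES_points t A),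
          in_square (ES_points t A) s &
          (T <= t)%N -> s <= ((C * n ^ 2 * (trunc_log 2 n) ^ 3)%N)%:Z].
Proof.
exists 100%N, 3%N => t _ n; exists (ES_block t), (ES_side t); split.
- exact: ES_construction_blocks.
- exact: general_position_ES.
- exact: in_square_ES.
- exact: ES_side_bound.
Qed.
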